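(* Let $m,n,p,q\in\mathbb{R}$ with $m<0$, and let $P(t)=t^5+mt^3+nt^2+pt+q$. Set $u=\frac{2\sqrt{-m}}{\sqrt5}$, $\alpha=\frac{16n}{u^3}$, $\beta=\frac{16p}{u^4}-5$, $\gamma=\frac{16q}{u^5}$, and $f(\theta)=\alpha\cos^2\theta+\beta\cos\theta+\cos 5\theta+\gamma$. Let $N_{\mathrm{int}}$ be the number of zeros of $f$ in $[0,\pi]$ and $N_{\mathrm{ext}}$ the number of real roots of $P$ outside $[-u,u]$. Then $P(t)=0$ has exactly one real root (and two conjugate pairs of nonreal complex roots) if and only if $N_{\mathrm{int}}+N_{\mathrm{ext}}=1$. In this case one of the following holds: (a) $f$ has exactly one zero in $[0,\pi]$ and $N_{\mathrm{ext}}=0$, and the unique real root lies in $[-u,u]$; (b) $f$ has no zeros in $[0,\pi]$ and $f(\pi)>0$, and the unique real root lies in $(-\infty,-u)$; (c) $f$ has no zeros in $[0,\pi]$ and $f(0)<0$, and the unique real root lies in $(u,\infty)$.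
   Context: Note $f(0)=\alpha+\beta+1+\gamma$ and $f(\pi)=\alpha-\beta-1+\gamma$. *)

From Stdlib Require Import Reals List.
Open Scope R_scope.

Definition Pq (m n p q t : R) : R := t^5 + m * t^3 + n * t^2 + p * t + q.

Definition uu (m : R) : R := 2 * sqrt (- m) / sqrt 5.

Definition alpha (m n : R) : R := 16 * n / (uu m)^3.
Definition beta (m p : R) : R := 16 * p / (uu m)^4 - 5.
Definition gamma (m q : R) : R := 16 * q / (uu m)^5.

Definition ff (m n p q th : R) : R :=
  alpha m n * (cos th)^2 + beta m p * cos th + cos (5 * th) + gamma m q.

Definition card_eq (S : R -> Prop) (k : nat) : Prop :=
  exists l : list R, NoDup l /\ length l = k /\ (forall x, In x l <-> S x).

Definition Zint (m n p q : R) : R -> Prop :=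
  fun th => 0 <= th <= PI /\ ff m n p q th = 0.

Definition Zext (m n p q : R) : R -> Prop :=
  fun t => Pq m n p q t = 0 /\ ~ (- uu m <= t <= uu m).

Definition Zreal (m n p q : R) : R -> Prop :=
  fun t => Pq m n p q t = 0.

(* Since [m = -5u^2/4] and [cos 5θ = 16cos^5 θ - 20cos^3 θ + 5cos θ], one has
   [f(θ) = 16/u^5 · P(u cos θ)], and [θ ↦ u cos θ] is a bijection from [0, π]
   onto [-u, u].  Hence the zeros of [f] in [0, π] correspond to the real roots
   of [P] in [-u, u], and the real roots of [P] split into those and the ones
   counted by [N_ext].  If the unique root lies to the right of [u], then [P]
   has no root in [(-∞, u]] and is negative far to the left, so [P(u) < 0],
   i.e. [f(0) < 0]; symmetrically [f(π) > 0] when it lies to the left of [-u]. *)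
From Stdlib Require Import Reals List Lra Psatz Classical.
Open Scope R_scope.

Lemma card_eq_0 (S : R -> Prop) : card_eq S 0 <-> forall x, ~ S x.
Proof.
  split.
  - intros [l [_ [hl hS]]] x hx.
    destruct l; [|discriminate]. apply hS in hx. exact hx.
  - intros h. exists nil. repeat split; [constructor | intros [] | apply h].
Qed.

Lemma card_eq_1 (S : R -> Prop) : card_eq S 1 <-> exists r, forall x, S x <-> x = r.
Proof.
  split.
  - intros [l [_ [hl hS]]].
    destruct l as [|r [|]]; try discriminate.
    exists r. intro x. rewrite <- hS. simpl. intuition.
  - intros [r hr]. exists (r :: nil). repeat split.
    + constructor; [intros [] | constructor].
    + intros [<- | []]. apply hr. reflexivity.
    + intros hx. apply hr in hx. left. congruence.
Qed.

Lemma card_eq_transport (S T : R -> Prop) (f g : R -> R) (k : nat) :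
  (forall x, S x -> T (f x)) -> (forall y, T y -> S (g y)) ->
  (forall x, S x -> g (f x) = x) -> (forall y, T y -> f (g y) = y) ->
  card_eq S k -> card_eq T k.
Proof.
  intros hST hTS hgf hfg [l [hnd [hl hS]]].
  exists (map f l). split; [|split].
  - apply (NoDup_map_inv g).
    rewrite map_map, (map_ext_in _ (fun x => x)), map_id; [exact hnd|].
    intros x hx. apply hgf, hS, hx.
  - rewrite length_map. exact hl.
  - intro y. rewrite in_map_iff. split.
    + intros [x [<- hx]]. apply hST, hS, hx.
    + intros hy. exists (g y). split; [apply hfg, hy | apply hS, hTS, hy].
Qed.

Lemma card_eq_ext (S T : R -> Prop) (k : nat) :
  (forall x, S x <-> T x) -> card_eq S k -> card_eq T k.
Proof.
  intros h. apply card_eq_transport with (fun x => x) (fun x => x); firstorder.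
Qed.

Lemma card_eq_union (A B : R -> Prop) (a b : nat) :
  (forall x, A x -> ~ B x) -> card_eq A a -> card_eq B b ->
  card_eq (fun x => A x \/ B x) (a + b).
Proof.
  intros hAB [la [nda [hla hA]]] [lb [ndb [hlb hB]]].
  exists (la ++ lb). split; [|split].
  - apply NoDup_app; [exact nda | exact ndb |].
    intros x hxa hxb. apply (hAB x); [apply hA | apply hB]; assumption.
  - rewrite length_app. congruence.
  - intro x. rewrite in_app_iff, hA, hB. reflexivity.
Qed.

Lemma card_eq_union_1 (A B : R -> Prop) :
  (forall x, A x -> ~ B x) -> card_eq (fun x => A x \/ B x) 1 ->
  (card_eq A 1 /\ card_eq B 0) \/ (card_eq A 0 /\ card_eq B 1).
Proof.
  intros hAB h1. rewrite !card_eq_0, !card_eq_1.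
  apply card_eq_1 in h1 as [r hr].
  assert (hAr : forall x, A x -> x = r) by (intros x hx; apply hr; left; exact hx).
  assert (hBr : forall x, B x -> x = r) by (intros x hx; apply hr; right; exact hx).
  destruct (proj2 (hr r) eq_refl) as [har | hbr].
  - left. split.
    + exists r. intro x. split; [apply hAr | intros ->; exact har].
    + intros x hx. apply (hAB r har). rewrite <- (hBr x hx). exact hx.
  - right. split.
    + intros x hx. apply (hAB r); [rewrite <- (hAr x hx); exact hx | exact hbr].
    + exists r. intro x. split; [apply hBr | intros ->; exact hbr].
Qed.

Lemma cos_5x (x : R) : cos (5 * x) = 16 * cos x ^ 5 - 20 * cos x ^ 3 + 5 * cos x.
Proof.
  replace (5 * x) with (2 * (2 * x) + x) by ring.
  rewrite cos_plus, sin_2a, cos_2a_cos, (cos_2a_cos x), (sin_2a x).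
  pose proof (sin2_cos2 x) as hsc. unfold Rsqr in hsc.
  replace (sin x * sin x) with (1 - cos x * cos x) by lra.
  transitivity ((2 * (2 * cos x * cos x - 1) * (2 * cos x * cos x - 1) - 1) * cos x
                - 4 * (sin x * sin x) * cos x * (2 * cos x * cos x - 1)); [ring|].
  replace (sin x * sin x) with (1 - cos x * cos x) by lra. ring.
Qed.

Lemma uu_pos (m : R) : m < 0 -> 0 < uu m.
Proof.
  intro hm. unfold uu.
  assert (0 < sqrt (- m)) by (apply sqrt_lt_R0; lra).
  assert (0 < sqrt 5) by (apply sqrt_lt_R0; lra).
  apply Rdiv_lt_0_compat; lra.
Qed.

Lemma uu_sqr (m : R) : m < 0 -> uu m ^ 2 = - 4 * m / 5.
Proof.
  intro hm. unfold uu.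
  assert (0 < sqrt 5) by (apply sqrt_lt_R0; lra).
  replace ((2 * sqrt (- m) / sqrt 5) ^ 2)
    with (4 * (sqrt (- m) * sqrt (- m)) / (sqrt 5 * sqrt 5)) by (field; lra).
  rewrite !sqrt_sqrt; lra.
Qed.

Lemma ff_Pq (m n p q th : R) : m < 0 ->
  ff m n p q th = 16 / uu m ^ 5 * Pq m n p q (uu m * cos th).
Proof.
  intro hm. pose proof (uu_pos m hm). pose proof (uu_sqr m hm).
  unfold ff, alpha, beta, gamma, Pq. rewrite cos_5x.
  set (u := uu m) in *.
  replace m with (- 5 / 4 * u ^ 2) by lra.
  field. lra.
Qed.

Lemma scale_pos (m : R) : m < 0 -> 0 < 16 / uu m ^ 5.
Proof.
  intro hm. apply Rdiv_lt_0_compat; [lra | apply pow_lt, uu_pos, hm].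
Qed.

Lemma ff_eq0 (m n p q th : R) : m < 0 ->
  ff m n p q th = 0 <-> Pq m n p q (uu m * cos th) = 0.
Proof.
  intro hm. rewrite ff_Pq by exact hm. pose proof (scale_pos m hm).
  split; intro h; [|rewrite h; ring].
  destruct (Rmult_integral _ _ h); [lra | assumption].
Qed.

Definition Zin (m n p q : R) : R -> Prop :=
  fun t => Pq m n p q t = 0 /\ - uu m <= t <= uu m.

Lemma card_Zint_Zin (m n p q : R) (k : nat) : m < 0 ->
  card_eq (Zint m n p q) k <-> card_eq (Zin m n p q) k.
Proof.
  intro hm. pose proof (uu_pos m hm) as hu.
  assert (hcos : forall th, - uu m <= uu m * cos th <= uu m)
    by (intro th; pose proof (COS_bound th); nra).
  assert (hdiv : forall t, - uu m <= t <= uu m -> -1 <= t / uu m <= 1).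
  { intros t ht. split; [apply Rmult_le_reg_r with (uu m) | apply Rmult_le_reg_r with (uu m)];
      unfold Rdiv; rewrite ?Rmult_assoc, ?Rinv_l; lra. }
  assert (hacos : forall t, - uu m <= t <= uu m -> uu m * cos (acos (t / uu m)) = t).
  { intros t ht. rewrite cos_acos by (apply hdiv, ht). field. lra. }
  assert (hcos_acos : forall th, 0 <= th <= PI -> acos (uu m * cos th / uu m) = th).
  { intros th hth. replace (uu m * cos th / uu m) with (cos th) by (field; lra).
    apply acos_cos, hth. }
  set (to_root := fun th => uu m * cos th).
  set (to_angle := fun t => acos (t / uu m)).
  assert (h1 : forall th, Zint m n p q th -> Zin m n p q (to_root th)).
  { intros th [hth hf]. rewrite ff_eq0 in hf by exact hm. split; [exact hf | apply hcos]. }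
  assert (h2 : forall t, Zin m n p q t -> Zint m n p q (to_angle t)).
  { intros t [hP ht]. split; [apply acos_bound |].
    rewrite ff_eq0 by exact hm. unfold to_angle. rewrite hacos; assumption. }
  assert (h3 : forall th, Zint m n p q th -> to_angle (to_root th) = th)
    by (intros th [hth _]; apply hcos_acos, hth).
  assert (h4 : forall t, Zin m n p q t -> to_root (to_angle t) = t)
    by (intros t [_ ht]; apply hacos, ht).
  split; [apply (card_eq_transport _ _ to_root to_angle)
         | apply (card_eq_transport _ _ to_angle to_root)]; assumption.
Qed.

Lemma Zreal_Zin_Zext (m n p q t : R) :
  Zreal m n p q t <-> Zin m n p q t \/ Zext m n p q t.
Proof.
  unfold Zreal, Zin, Zext.
  destruct (classic (- uu m <= t <= uu m)); tauto.
Qed.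

Lemma Zin_not_Zext (m n p q t : R) : Zin m n p q t -> ~ Zext m n p q t.
Proof. unfold Zin, Zext. tauto. Qed.

Lemma no_root_same_sign (g : R -> R) (a b : R) : continuity g -> a <= b ->
  (forall z, a <= z <= b -> g z <> 0) -> 0 < g a * g b.
Proof.
  intros hg hab hz. destruct (Rlt_or_le 0 (g a * g b)) as [h | h]; [exact h|].
  destruct (IVT_cor g a b hg hab h) as [z [hzab hgz]].
  exfalso. exact (hz z hzab hgz).
Qed.

Lemma Pq_continuous (m n p q : R) : continuity (Pq m n p q).
Proof. unfold Pq. reg. Qed.

Lemma Pq_opp (m n p q t : R) : Pq m n p q (- t) = - Pq m (- n) p (- q) t.
Proof. unfold Pq. ring. Qed.

Lemma Pq_pos_large (m n p q T : R) :
  1 + Rabs m + Rabs n + Rabs p + Rabs q <= T -> 0 < Pq m n p q T.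
Proof.
  intros hT. unfold Pq.
  pose proof (Rabs_pos m). pose proof (Rabs_pos n).
  pose proof (Rabs_pos p). pose proof (Rabs_pos q).
  pose proof (Rle_abs (- m)). pose proof (Rle_abs (- n)).
  pose proof (Rle_abs (- p)). pose proof (Rle_abs (- q)).
  rewrite !Rabs_Ropp in *.
  assert (hT2 : 1 <= T ^ 2) by nra.
  assert (hT3 : T ^ 2 <= T ^ 3 /\ T <= T ^ 3) by (simpl in *; split; nra).
  assert (m * T ^ 3 >= - Rabs m * T ^ 3) by nra.
  assert (n * T ^ 2 >= - Rabs n * T ^ 3) by nra.
  assert (p * T >= - Rabs p * T ^ 3) by nra.
  assert (q >= - Rabs q * T ^ 3) by nra.
  replace (T ^ 5) with (T ^ 2 * T ^ 3) by ring.
  nra.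
Qed.

Lemma Pq_neg_below_roots (m n p q b : R) :
  (forall t, Pq m n p q t = 0 -> b < t) -> Pq m n p q b < 0.
Proof.
  intros hroots.
  set (T := 1 + Rabs m + Rabs n + Rabs p + Rabs q + Rabs b).
  assert (hT : 1 + Rabs m + Rabs n + Rabs p + Rabs q <= T /\ - T <= b).
  { pose proof (Rle_abs (- b)). rewrite Rabs_Ropp in *.
    pose proof (Rabs_pos m). pose proof (Rabs_pos n). pose proof (Rabs_pos p).
    pose proof (Rabs_pos q). pose proof (Rabs_pos b).
    unfold T. split; lra. }
  assert (hfar : Pq m n p q (- T) < 0).
  { rewrite Pq_opp. enough (0 < Pq m (- n) p (- q) T) by lra.
    apply Pq_pos_large. rewrite !Rabs_Ropp. apply hT. }
  assert (hsign : 0 < Pq m n p q (- T) * Pq m n p q b).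
  { apply no_root_same_sign; [apply Pq_continuous | apply hT |].
    intros z hz hPz. specialize (hroots z hPz). lra. }
  nra.
Qed.

Lemma Pq_pos_above_roots (m n p q a : R) :
  (forall t, Pq m n p q t = 0 -> t < a) -> 0 < Pq m n p q a.
Proof.
  intros hroots.
  set (T := 1 + Rabs m + Rabs n + Rabs p + Rabs q + Rabs a).
  assert (hT : 1 + Rabs m + Rabs n + Rabs p + Rabs q <= T /\ a <= T).
  { pose proof (Rle_abs a).
    pose proof (Rabs_pos m). pose proof (Rabs_pos n). pose proof (Rabs_pos p).
    pose proof (Rabs_pos q). pose proof (Rabs_pos a).
    unfold T. split; lra. }
  assert (hfar : 0 < Pq m n p q T) by (apply Pq_pos_large, hT).
  assert (hsign : 0 < Pq m n p q a * Pq m n p q T).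
  { apply no_root_same_sign; [apply Pq_continuous | apply hT |].
    intros z hz hPz. specialize (hroots z hPz). lra. }
  nra.
Qed.

Lemma card_Zreal_union (m n p q : R) (a b : nat) :
  card_eq (Zin m n p q) a -> card_eq (Zext m n p q) b -> card_eq (Zreal m n p q) (a + b).
Proof.
  intros ha hb. apply card_eq_ext with (fun t => Zin m n p q t \/ Zext m n p q t).
  - intro t. symmetry. apply Zreal_Zin_Zext.
  - apply card_eq_union; [apply Zin_not_Zext | exact ha | exact hb].
Qed.

Lemma card_Zreal_1 (m n p q : R) : card_eq (Zreal m n p q) 1 ->
  (card_eq (Zin m n p q) 1 /\ card_eq (Zext m n p q) 0) \/
  (card_eq (Zin m n p q) 0 /\ card_eq (Zext m n p q) 1).
Proof.
  intros h. apply card_eq_union_1; [apply Zin_not_Zext |].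
  revert h. apply card_eq_ext. intro t. apply Zreal_Zin_Zext.
Qed.

Lemma unique_root_outside (m n p q r : R) : m < 0 ->
  (forall t, Pq m n p q t = 0 -> t = r) -> ~ (- uu m <= r <= uu m) ->
  (ff m n p q PI > 0 /\ (forall t, Pq m n p q t = 0 -> t < - uu m)) \/
  (ff m n p q 0 < 0 /\ (forall t, Pq m n p q t = 0 -> uu m < t)).
Proof.
  intros hm hroot hout. pose proof (scale_pos m hm).
  destruct (Rlt_or_le r (- uu m)) as [hlt | hle]; [left | right];
    rewrite ff_Pq by exact hm.
  - assert (hleft : forall t, Pq m n p q t = 0 -> t < - uu m)
      by (intros t ht; rewrite (hroot t ht); exact hlt).
    rewrite cos_PI. replace (uu m * -1) with (- uu m) by ring.
    pose proof (Pq_pos_above_roots m n p q (- uu m) hleft). split; [nra | exact hleft].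
  - assert (hright : forall t, Pq m n p q t = 0 -> uu m < t)
      by (intros t ht; rewrite (hroot t ht); lra).
    rewrite cos_0, Rmult_1_r.
    pose proof (Pq_neg_below_roots m n p q (uu m) hright). split; [nra | exact hright].
Qed.

Theorem theorem3 (m n p q : R) (hm : m < 0) :
  (card_eq (Zreal m n p q) 1 <->
     exists Nint Next : nat,
       card_eq (Zint m n p q) Nint /\ card_eq (Zext m n p q) Next /\
       (Nint + Next = 1)%nat) /\
  (card_eq (Zreal m n p q) 1 ->
     (card_eq (Zint m n p q) 1 /\ card_eq (Zext m n p q) 0 /\
        (forall t, Pq m n p q t = 0 -> - uu m <= t <= uu m))
     \/
     (card_eq (Zint m n p q) 0 /\ ff m n p q PI > 0 /\
        (forall t, Pq m n p q t = 0 -> t < - uu m))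
     \/
     (card_eq (Zint m n p q) 0 /\ ff m n p q 0 < 0 /\
        (forall t, Pq m n p q t = 0 -> uu m < t))).
Proof.
  split; [split|].
  - intros h. destruct (card_Zreal_1 m n p q h) as [[hi he] | [hi he]];
      [exists 1%nat, 0%nat | exists 0%nat, 1%nat]; rewrite card_Zint_Zin by exact hm; auto.
  - intros [Ni [Ne [hi [he <-]]]]. rewrite card_Zint_Zin in hi by exact hm.
    apply card_Zreal_union; assumption.
  - intros h. rewrite !card_Zint_Zin by exact hm.
    destruct (card_Zreal_1 m n p q h) as [[hi he] | [hi he]].
    + left. split; [exact hi | split; [exact he |]].
      intros t ht. destruct (proj1 (Zreal_Zin_Zext m n p q t) ht) as [[_ hb] | hx];
        [exact hb | exfalso; exact (proj1 (card_eq_0 _) he t hx)].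
    + apply card_eq_1 in he as [r hr].
      assert (hroot : forall t, Pq m n p q t = 0 -> t = r).
      { intros t ht. apply hr. destruct (proj1 (Zreal_Zin_Zext m n p q t) ht) as [hx | hx];
          [exfalso; exact (proj1 (card_eq_0 _) hi t hx) | exact hx]. }
      destruct (proj2 (hr r) eq_refl) as [_ hout].
      right. destruct (unique_root_outside m n p q r hm hroot hout) as [[hf hl] | [hf hl]];
        [left | right]; auto.
Qed.
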